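(* Let $X$ be a locally compact Hausdorff space and $\sigma:X\to X$ a homeomorphism. Then each of the following sets is dense in $X$: (1) $\mathrm{Aper}(\sigma)\cup\bigcup_{q\ge1}\mathrm{Fix}_q(\sigma)^\circ$; (2) $\mathrm{Aper}(\sigma)\cup\big(\bigcup_{q\ge1}\mathrm{Fix}_q(\sigma)\big)^\circ$; (3) $\mathrm{Aper}(\sigma)\cup\bigcup_{q\ge1}\mathrm{Per}_q(\sigma)^\circ$; (4) $\mathrm{Aper}(\sigma)\cup\big(\bigcup_{q\ge1}\mathrm{Per}_q(\sigma)\big)^\circ$.
   Context: For $q\ge1$, $\mathrm{Fix}_q(\sigma)=\{x\in X:\sigma^qx=x\}$ and $\mathrm{Per}_q(\sigma)$ is the set of points of least period exactly $q$; $\mathrm{Aper}(\sigma)$ is the set of non-periodic points. A superscript $\circ$ denotes interior in $X$. *)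

From HB Require Import structures.
From mathcomp Require Import all_boot all_order all_algebra.
From mathcomp Require Import all_classical all_reals all_analysis.
Set Implicit Arguments. Unset Strict Implicit. Unset Printing Implicit Defensive.
Local Open Scope classical_set_scope.

Definition Fix (X : Type) (s : X -> X) (q : nat) : set X :=
  [set x | iter q s x = x].

Definition Per (X : Type) (s : X -> X) (q : nat) : set X :=
  [set x | (0 < q)%N /\ iter q s x = x /\
           forall k : nat, (0 < k)%N -> (k < q)%N -> iter k s x <> x].

Definition Aper (X : Type) (s : X -> X) : set X :=
  [set x | forall q : nat, (0 < q)%N -> iter q s x <> x].

Definition homeomorphism (X : topologicalType) (s : X -> X) : Prop :=
  continuous s /\ exists t : X -> X,
    cancel s t /\ cancel t s /\ continuous t.

From HB Require Import structures.
From mathcomp Require Import all_boot all_order all_algebra.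
From mathcomp Require Import all_classical all_reals all_analysis.
Local Open Scope classical_set_scope.

(* Suppose a nonempty open set U misses
   Aper. Then U is covered by the sets Fix_q, q >= 1, which are closed since X
   is Hausdorff, so by the Baire category theorem for locally compact Hausdorff
   spaces some Fix_n has interior meeting U; this open piece W consists of
   points of period at most n. Take the largest q <= n such that W is not
   contained in the closed set of points of period < q: the points of W outside
   that set form a nonempty open subset of Per_q. This proves (3), and the
   other three sets contain the set in (3). *)

Lemma dependent_choice_nat (T : Type) (P : T -> Prop) (R : nat -> T -> T -> Prop)
    (x0 : T) :
  P x0 -> (forall n x, P x -> exists2 y, P y & R n x y) ->
  exists f : nat -> T, f 0 = x0 /\ forall n, P (f n) /\ R n (f n) (f n.+1).
Proof.
move=> Px0 stepP.
have /choice[g gP] : forall nx : nat * T, exists y,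
    P nx.2 -> P y /\ R nx.1 nx.2 y.
  move=> [n x]; have [Px|nPx] := pselect (P x); last by exists x.
  by have [y Py Rxy] := stepP n x Px; exists y.
pose f := fix f n := if n is m.+1 then g (m, f m) else x0.
have fP n : P (f n) by elim: n => [|n IH] //=; have [] := gP (n, f n) IH.
by exists f; split => // n; split => //; have [] := gP (n, f n) (fP n).
Qed.

Section Topology.
Context {X : topologicalType}.
Implicit Types (A B U V W : set X) (f : X -> X).

Lemma denseS A B : dense A -> A `<=` B -> dense B.
Proof.
move=> dA AB O O0 oO; have [x [Ox Ax]] := dA O O0 oO.
by exists x; split => //; exact: AB.
Qed.

Lemma open_meets_interior {A B} :
  open A -> A !=set0 -> A `<=` B -> A `&` B° !=set0.
Proof.
by move=> oA [x Ax]; rewrite open_subsetE // => AB; exists x; split => //; exact: AB.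
Qed.

Lemma bigcup_interior_sub {I : Type} (P : set I) (F : I -> set X) :
  \bigcup_(i in P) (F i)° `<=` (\bigcup_(i in P) F i)°.
Proof.
rewrite -open_subsetE; last by apply: bigcup_open => i _; exact: open_interior.
by apply: subset_bigcup => i _; exact: interior_subset.
Qed.

Lemma continuous_iter {f} n : continuous f -> continuous (iter n f).
Proof.
move=> cf; elim: n => [|n IH] x /=; first exact: cvg_id.
exact: continuous_comp (IH x) (cf _).
Qed.

Lemma closed_fixed_points {f} : hausdorff_space X -> continuous f ->
  closed [set x | f x = x].
Proof.
move=> hX cf x clx; apply/esym/hX => A B Ax Bfx.
have [y [/= fy [Ay By]]] := clx _ (filterI Ax (cf x B Bfx)).
by exists y; split => //; rewrite /= -fy.
Qed.

Lemma nested_compact_bigcap (C : nat -> set X) :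
  (forall n, closed (C n)) -> (forall n, C n !=set0) ->
  (forall n, C n.+1 `<=` C n) -> compact (C 0) -> exists p, forall n, C n p.
Proof.
move=> clC C0 CS cC0.
have Cle i j : (i <= j)%N -> C j `<=` C i.
  move=> /subnKC <-; elim: (j - i)%N => [|k IH]; first by rewrite addn0.
  by rewrite addnS; exact: subset_trans (CS _) IH.
have F_filter : ProperFilter (filter_from setT C).
  apply: filter_from_proper => [|i _]; last exact: C0.
  apply: filter_from_filter; first by exists 0%N.
  move=> i j _ _; exists (maxn i j) => // z Cz.
  by split; [exact: Cle (leq_maxl i j) _ Cz|exact: Cle (leq_maxr i j) _ Cz].
have FC n : filter_from setT C (C n) by exists n.
have [p [_ clp]] := cC0 _ F_filter (FC 0%N).
by exists p => n; apply: clC => B; exact: clp (FC n).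
Qed.

Hypotheses (hX : hausdorff_space X) (lcX : locally_compact [set: X]).

Lemma locally_compact_shrink {U x} : open U -> U x ->
  exists V, [/\ open V, V x, compact (closure V) & closure V `<=` U].
Proof.
move=> oU Ux; have [K + [cK _]] := lcX x I; rewrite withinET => Kx.
have UKx : nbhs x (U `&` K) by apply: filterI => //; exact: open_nbhs_nbhs.
have [D Dx DUK] := compact_regular hX cK Kx UKx.
have clDUK : closure D° `<=` U `&` K.
  by move=> y /(closureS (@interior_subset _ D)) /DUK.
exists D°; split; [exact: open_interior|exact: Dx| |by move=> y /clDUK[]].
by apply: subclosed_compact cK _; [exact: closed_closure|move=> y /clDUK[]].
Qed.

Lemma shrink_off_closed {V} {F : set X} : open V -> V !=set0 -> closed F ->
  V `&` F° = set0 ->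
  exists2 V', open V' /\ V' !=set0 & compact (closure V') /\ closure V' `<=` V `\` F.
Proof.
move=> oV V0 clF VF.
have [[y VFy]|VF0] := pselect ((V `\` F) !=set0).
  have oVF : open (V `\` F) by apply: openI => //; exact: closed_openC.
  have [V' [oV' V'y cV' sV']] := locally_compact_shrink oVF VFy.
  by exists V'; split => //; exists y.
have VsubF : V `<=` F.
  by move=> z Vz; apply: contrapT => nFz; apply: VF0; exists z.
by have := open_meets_interior oV V0 VsubF; rewrite VF => -[].
Qed.

Theorem baire_locally_compact (F : nat -> set X) W :
  (forall n, closed (F n)) -> open W -> W !=set0 -> W `<=` \bigcup_n F n ->
  exists n, W `&` (F n)° !=set0.
Proof.
move=> clF oW W0 WF; apply: contrapT => noInt.
have WFn n : W `&` (F n)° = set0.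
  by apply/seteqP; split => // z WFz; apply: noInt; exists n, z.
pose P V := open V /\ V !=set0 /\ V `<=` W.
pose R n V V' := compact (closure V') /\ closure V' `<=` V `\` F n.
have [G [G0 GP]] : exists G : nat -> set X, G 0 = W /\
    forall n, P (G n) /\ R n (G n) (G n.+1).
  apply: dependent_choice_nat => [|n V [oV [V0 VW]]]; first by split=> //; split.
  have VFn : V `&` (F n)° = set0.
    by apply/seteqP; split => // z [Vz Fz]; rewrite -(WFn n); split => //; exact: VW.
  have [V' [oV' V'0] [cV' sV']] := shrink_off_closed oV V0 (clF n) VFn.
  exists V' => //; split => //; split => //.
  by move=> z /subset_closure /sV' [/VW].
have [p Cp] : exists p, forall n, closure (G n.+1) p.
  apply: nested_compact_bigcap => [n|n|n|]; first exact: closed_closure.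
  - by have [[_ [[z Gz] _]] _] := GP n.+1; exists z; exact: subset_closure.
  - by have [_ [_ sG]] := GP n.+1; move=> z /sG [/subset_closure].
  - by have [_ []] := GP 0%N.
have [n _ Fnp] : (\bigcup_n F n) p.
  by apply: WF; rewrite -G0; have [_ [_ /(_ p (Cp 0%N)) []]] := GP 0%N.
by have [_ [_ /(_ p (Cp n)) []]] := GP n.
Qed.

End Topology.

Section Periods.
Context {X : topologicalType} (s : X -> X).
Hypotheses (hX : hausdorff_space X) (cs : continuous s).

Lemma closed_Fix q : closed (Fix s q).
Proof. exact: closed_fixed_points hX (continuous_iter q cs). Qed.

Lemma Per_sub_Fix q : Per s q `<=` Fix s q.
Proof. by move=> x [_ []]. Qed.

Definition Fix_upto (m : nat) : set X :=
  [set x | exists2 k, (0 < k <= m)%N & Fix s k x].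

Lemma Fix_upto0 : Fix_upto 0 = set0.
Proof. by apply/seteqP; split => x // [[|k]]. Qed.

Lemma Fix_uptoS m : Fix_upto m.+1 = Fix_upto m `|` Fix s m.+1.
Proof.
apply/seteqP; split => x.
  move=> [k /andP[k0]]; rewrite leq_eqVlt ltnS => /orP[/eqP->|km] Fx.
    by right.
  by left; exists k => //; rewrite k0.
case=> [[k /andP[k0 km] Fx]|Fx]; last by exists m.+1; rewrite ?leqnn.
by exists k => //; rewrite k0 ltnW.
Qed.

Lemma closed_Fix_upto m : closed (Fix_upto m).
Proof.
elim: m => [|m IH]; first by rewrite Fix_upto0; exact: closed0.
by rewrite Fix_uptoS; exact: closedU IH (closed_Fix _).
Qed.

Lemma Fix_uptoS_setD_sub_Per m : Fix_upto m.+1 `\` Fix_upto m `<=` Per s m.+1.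
Proof.
move=> x []; rewrite Fix_uptoS => -[//|Fx] nFx.
by split => //; split => // k k0 km Fkx; apply: nFx; exists k; rewrite ?k0.
Qed.

Lemma Per_interior_meets_open {m} {W : set X} : open W -> W !=set0 ->
  W `<=` Fix_upto m -> exists2 q, (0 < q)%N & W `&` (Per s q)° !=set0.
Proof.
elim: m W => [|m IH] W oW W0 WFix.
  by have [w Ww] := W0; have := WFix w Ww; rewrite Fix_upto0.
have [W1_0|W1_empty] := pselect ((W `\` Fix_upto m) !=set0); last first.
  apply: IH => // z Wz; apply: contrapT => nFz; apply: W1_empty; by exists z.
have oW1 : open (W `\` Fix_upto m).
  by apply: openI oW _; exact/closed_openC/closed_Fix_upto.
have W1Per : W `\` Fix_upto m `<=` Per s m.+1.
  by move=> z [Wz nFz]; apply: Fix_uptoS_setD_sub_Per; split => //; exact: WFix.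
exists m.+1 => //; have [z [[Wz _] Pz]] := open_meets_interior oW1 W1_0 W1Per.
by exists z.
Qed.

Hypothesis lcX : locally_compact [set: X].

Lemma dense_Aper_Per_interior :
  dense (Aper s `|` \bigcup_(q in [set q : nat | (0 < q)%N]) (Per s q)°).
Proof.
move=> U U0 oU.
have [[x [Ux Ax]]|noAper] := pselect (exists x, U x /\ Aper s x).
  by exists x; split => //; left.
have UFix : U `<=` \bigcup_n Fix s n.+1.
  move=> x Ux; apply: contrapT => nF; apply: noAper; exists x; split => //.
  by move=> [|q] // _ Fq; apply: nF; exists q.
have [n UFn] := baire_locally_compact hX lcX _ _ (fun n => closed_Fix n.+1) oU U0 UFix.
have oW : open (U `&` (Fix s n.+1)°) by apply: openI => //; exact: open_interior.
have WFix : U `&` (Fix s n.+1)° `<=` Fix_upto n.+1.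
  by move=> y [_ /interior_subset Fy]; exists n.+1; rewrite ?leqnn.
have [q q0 [y [[Uy _] Py]]] := Per_interior_meets_open oW UFn WFix.
by exists y; split => //; right; exists q.
Qed.

End Periods.

Theorem corollaryA3 (X : topologicalType) (s : X -> X) :
  hausdorff_space X -> locally_compact [set: X] -> homeomorphism s ->
  [/\ dense (Aper s `|` \bigcup_(q in [set q : nat | (0 < q)%N]) (Fix s q)°),
      dense (Aper s `|` (\bigcup_(q in [set q : nat | (0 < q)%N]) Fix s q)°),
      dense (Aper s `|` \bigcup_(q in [set q : nat | (0 < q)%N]) (Per s q)°)
    & dense (Aper s `|` (\bigcup_(q in [set q : nat | (0 < q)%N]) Per s q)°)].
Proof.
move=> hX lcX [cs _].
have densePer := dense_Aper_Per_interior s hX cs lcX.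
have PerFix q : (Per s q)° `<=` (Fix s q)° by exact/interiorS/Per_sub_Fix.
split => //; apply: denseS densePer _; apply: setUS.
- exact: subset_bigcup (fun q _ => PerFix q).
- move=> x [q q0 /PerFix Fx].
  by apply: (bigcup_interior_sub _ (Fix s)); exists q.
- exact: (bigcup_interior_sub _ (Per s)).
Qed.
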